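(* Let $n,k$ be integers with $2\le k\le n/2$. For every Gutkin $(n,k)$-gon, the contact angle equals $\pi(k-1)/n$.
   Context: Let $P$ be a convex $n$-gon in the Euclidean plane with vertices $v_0,\dots,v_{n-1}$ in their cyclic (counterclockwise) order, indices taken modulo $n$. $P$ is a Gutkin $(n,k)$-gon if there exists an angle $\alpha$ (the contact angle) such that for every $i$, $\angle v_{i+1}v_iv_{i+k}=\angle v_{i+k-1}v_{i+k}v_i=\alpha$, where $\angle abc$ denotes the angle at $b$ between the segments $ba$ and $bc$. *)

From Stdlib Require Import Reals Lra Lia.
Open Scope R_scope.

Definition pt := (R * R)%type.

Definition vsub (a b : pt) : pt := (fst a - fst b, snd a - snd b).
Definition dot (u w : pt) : R := fst u * fst w + snd u * snd w.
Definition cross (u w : pt) : R := fst u * snd w - snd u * fst w.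
Definition vnorm (u : pt) : R := sqrt (dot u u).

Definition angle (a b c : pt) : R :=
  acos (dot (vsub a b) (vsub c b) / (vnorm (vsub a b) * vnorm (vsub c b))).

Definition vert (n : nat) (v : nat -> pt) (i : nat) : pt := v (i mod n)%nat.

(* P = (v_0, ..., v_{n-1}) is a convex n-gon with vertices listed in
   counterclockwise order: n >= 3 and, for every directed edge v_i v_{i+1},
   every other vertex lies strictly to its left. *)
Definition convex_ccw_polygon (n : nat) (v : nat -> pt) : Prop :=
  (3 <= n)%nat /\
  forall i j : nat, (i < n)%nat -> (j < n)%nat -> j <> i -> j <> ((i + 1) mod n)%nat ->
    0 < cross (vsub (vert n v (i + 1)) (vert n v i)) (vsub (vert n v j) (vert n v i)).

Definition gutkin_contact (n k : nat) (v : nat -> pt) (alpha : R) : Prop :=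
  forall i : nat,
    angle (vert n v (i + 1)) (vert n v i) (vert n v (i + k)) = alpha /\
    angle (vert n v (i + k - 1)) (vert n v (i + k)) (vert n v i) = alpha.

(* Each window v_i v_(i+1) ... v_(i+k) is a convex (k+1)-gon, so its angles sum to (k-1) PI.
   Those angles are the two contact angles at v_i and v_(i+k) together with the interior
   angles of P at v_(i+1), ..., v_(i+k-1).  Summing over the n windows counts every interior
   angle of P exactly k-1 times, so n (k-1) PI = 2 n alpha + (k-1) (n-2) PI, i.e.
   alpha = (k-1) PI / n. *)

From Stdlib Require Import Reals Lra Lia Psatz.
Open Scope R_scope.

Definition vangle (u w : pt) : R := acos (dot u w / (vnorm u * vnorm w)).

Definition vopp (u : pt) : pt := (- fst u, - snd u).

Lemma angle_vangle a b c : angle a b c = vangle (vsub a b) (vsub c b).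
Proof. reflexivity. Qed.

Lemma cross_antisym u w : cross w u = - cross u w.
Proof. destruct u, w; unfold cross; simpl; ring. Qed.

Lemma dot_self_pos_of_cross u w : cross u w <> 0 -> 0 < dot u u.
Proof.
  destruct u as [a b], w as [c d]; unfold cross, dot; simpl; intros H.
  destruct (Req_dec a 0); destruct (Req_dec b 0); subst; nra.
Qed.

Lemma vnorm_pos_of_cross u w : cross u w <> 0 -> 0 < vnorm u.
Proof. intros H; apply sqrt_lt_R0; exact (dot_self_pos_of_cross u w H). Qed.

Lemma vnorm_sqr u : vnorm u * vnorm u = dot u u.
Proof. apply sqrt_sqrt. destruct u; unfold dot; simpl; nra. Qed.

Lemma lagrange_identity u w : dot u u * dot w w = dot u w ^ 2 + cross u w ^ 2.
Proof. destruct u, w; unfold cross, dot; simpl; ring. Qed.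

Lemma vangle_cos_sin u w : 0 < cross u w ->
  cos (vangle u w) = dot u w / (vnorm u * vnorm w) /\
  sin (vangle u w) = cross u w / (vnorm u * vnorm w).
Proof.
  intros H.
  assert (Hu : 0 < vnorm u) by (apply (vnorm_pos_of_cross u w); lra).
  assert (Hw : 0 < vnorm w)
    by (apply (vnorm_pos_of_cross w u); rewrite cross_antisym; lra).
  set (x := dot u w / (vnorm u * vnorm w)).
  set (y := cross u w / (vnorm u * vnorm w)).
  assert (Hxy : 1 - x² = y * y).
  { unfold x, y, Rsqr. field_simplify_eq; [| lra].
    replace (vnorm u ^ 2 * vnorm w ^ 2) with (dot u u * dot w w)
      by (rewrite <- (vnorm_sqr u), <- (vnorm_sqr w); ring).
    rewrite lagrange_identity; ring. }
  assert (Hy : 0 < y) by (unfold y; apply Rdiv_lt_0_compat; nra).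
  assert (Hx : -1 <= x <= 1) by (unfold Rsqr in Hxy; split; nra).
  unfold vangle; fold x; split.
  - apply cos_acos; exact Hx.
  - rewrite sin_acos by exact Hx. rewrite Hxy. apply sqrt_square. lra.
Qed.

Lemma vangle_add u w z : 0 < cross u w -> 0 < cross w z -> 0 < cross u z ->
  vangle u w + vangle w z = vangle u z.
Proof.
  intros Huw Hwz Huz.
  destruct (vangle_cos_sin u w Huw) as [Cuw Suw].
  destruct (vangle_cos_sin w z Hwz) as [Cwz Swz].
  assert (Hu : 0 < vnorm u) by (apply (vnorm_pos_of_cross u w); lra).
  assert (Hw : 0 < vnorm w) by (apply (vnorm_pos_of_cross w z); lra).
  assert (Hz : 0 < vnorm z)
    by (apply (vnorm_pos_of_cross z u); rewrite cross_antisym; lra).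
  pose proof (vnorm_sqr w) as Sw.
  assert (Idot : dot u w * dot w z - cross u w * cross w z = dot w w * dot u z)
    by (destruct u, w, z; unfold dot, cross; simpl; ring).
  assert (Icross : cross u w * dot w z + dot u w * cross w z = dot w w * cross u z)
    by (destruct u, w, z; unfold dot, cross; simpl; ring).
  assert (Ccos : cos (vangle u w + vangle w z) = dot u z / (vnorm u * vnorm z)).
  { rewrite cos_plus, Cuw, Cwz, Suw, Swz. field_simplify_eq; [| lra].
    rewrite <- Sw in Idot. nra. }
  assert (Ssin : 0 < sin (vangle u w + vangle w z)).
  { rewrite sin_plus, Cuw, Cwz, Suw, Swz.
    replace (cross u w / (vnorm u * vnorm w) * (dot w z / (vnorm w * vnorm z)) +
             dot u w / (vnorm u * vnorm w) * (cross w z / (vnorm w * vnorm z)))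
      with (cross u z / (vnorm u * vnorm z)).
    - apply Rdiv_lt_0_compat; nra.
    - field_simplify_eq; [| lra]. rewrite <- Sw in Icross. nra. }
  pose proof (acos_bound (dot u w / (vnorm u * vnorm w))).
  pose proof (acos_bound (dot w z / (vnorm w * vnorm z))).
  fold (vangle u w) (vangle w z) in *.
  assert (Hlt : vangle u w + vangle w z < PI).
  { destruct (Rlt_or_le (vangle u w + vangle w z) PI) as [h | h]; [exact h |].
    pose proof (sin_le_0 _ h ltac:(lra)). lra. }
  unfold vangle at 3. rewrite <- Ccos. symmetry. apply acos_cos. lra.
Qed.

Lemma vangle_sym u w : vangle u w = vangle w u.
Proof. unfold vangle, dot. rewrite (Rmult_comm (vnorm u)). do 2 f_equal. ring. Qed.

Lemma vangle_opp u w : vangle (vopp u) (vopp w) = vangle u w.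
Proof.
  unfold vangle, vnorm, vopp, dot; destruct u, w; simpl.
  do 2 f_equal; [ring |]. f_equal; f_equal; ring.
Qed.

Lemma vangle_add_oppr u w : vangle u w + vangle w (vopp u) = PI.
Proof.
  unfold vangle.
  replace (dot w (vopp u) / (vnorm w * vnorm (vopp u)))
    with (- (dot u w / (vnorm u * vnorm w))).
  - rewrite acos_opp. lra.
  - unfold vnorm, vopp, dot; destruct u as [a b], w as [c d]; simpl.
    replace (- a * - a + - b * - b) with (a * a + b * b) by ring.
    unfold Rdiv. rewrite (Rmult_comm (sqrt (c * c + d * d))). ring.
Qed.

Lemma angle_sym a b c : angle a b c = angle c b a.
Proof. rewrite !angle_vangle. apply vangle_sym. Qed.

Definition ccw (a b c : pt) : Prop := 0 < cross (vsub b a) (vsub c a).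

Lemma ccw_rot a b c : ccw a b c -> ccw b c a.
Proof. unfold ccw, cross, vsub; simpl; intros H; lra. Qed.

Lemma angle_split o a b c : ccw o a b -> ccw o b c -> ccw o a c ->
  angle a o b + angle b o c = angle a o c.
Proof. intros; rewrite !angle_vangle; apply vangle_add; assumption. Qed.

Lemma triangle_angle_sum a b c : ccw a b c ->
  angle b a c + angle a b c + angle a c b = PI.
Proof.
  intros H. rewrite !angle_vangle.
  set (u := vsub b a); set (w := vsub c a); set (z := vsub c b).
  assert (Eab : vsub a b = vopp u) by (unfold u, vopp, vsub; simpl; f_equal; ring).
  assert (Eac : vsub a c = vopp w) by (unfold w, vopp, vsub; simpl; f_equal; ring).
  assert (Ebc : vsub b c = vopp z) by (unfold z, vopp, vsub; simpl; f_equal; ring).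
  rewrite Eab, Eac, Ebc, vangle_opp, (vangle_sym (vopp u) z).
  assert (Hwz : 0 < cross w z) by (unfold ccw in H; unfold w, z, cross, vsub in *; simpl in *; lra).
  assert (Huz : 0 < cross u z) by (unfold ccw in H; unfold u, z, cross, vsub in *; simpl in *; lra).
  pose proof (vangle_add u w z H Hwz Huz).
  pose proof (vangle_add_oppr u z). lra.
Qed.

Fixpoint rsum (f : nat -> R) (n : nat) : R :=
  match n with O => 0 | S m => rsum f m + f m end.

Definition ccw_chain (q : nat -> pt) (m : nat) : Prop :=
  forall a b c, (a < b)%nat -> (b < c)%nat -> (c <= m)%nat -> ccw (q a) (q b) (q c).

Lemma chain_angle_sum q m : ccw_chain q (S (S m)) ->
  angle (q (S (S m))) (q 0%nat) (q 1%nat)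
  + rsum (fun t => angle (q t) (q (t + 1)%nat) (q (t + 2)%nat)) (S m)
  + angle (q (S m)) (q (S (S m))) (q 0%nat) = INR (S m) * PI.
Proof.
  induction m as [| m IH]; intros Hq.
  - pose proof (triangle_angle_sum _ _ _ (Hq 0%nat 1%nat 2%nat ltac:(lia) ltac:(lia) ltac:(lia))).
    simpl. rewrite (angle_sym (q 2%nat)), (angle_sym (q 1%nat) (q 2%nat)). lra.
  - set (p := S (S m)) in *.
    assert (IHq : ccw_chain q p) by (intros a b c ? ? ?; apply Hq; lia).
    specialize (IH IHq).
    pose proof (angle_split (q 0%nat) (q 1%nat) (q p) (q (S p))
      (Hq 0%nat 1%nat p ltac:(lia) ltac:(lia) ltac:(lia))
      (Hq 0%nat p (S p) ltac:(lia) ltac:(lia) ltac:(lia))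
      (Hq 0%nat 1%nat (S p) ltac:(lia) ltac:(lia) ltac:(lia))) as Split0.
    pose proof (angle_split (q p) (q (S p)) (q 0%nat) (q (S m))
      (ccw_rot _ _ _ (Hq 0%nat p (S p) ltac:(lia) ltac:(lia) ltac:(lia)))
      (ccw_rot _ _ _ (ccw_rot _ _ _ (Hq 0%nat (S m) p ltac:(lia) ltac:(lia) ltac:(lia))))
      (ccw_rot _ _ _ (Hq (S m) p (S p) ltac:(lia) ltac:(lia) ltac:(lia)))) as Splitp.
    pose proof (triangle_angle_sum _ _ _
      (Hq 0%nat p (S p) ltac:(lia) ltac:(lia) ltac:(lia))) as Tri.
    change (rsum ?f p) with (rsum f (S m) + f (S m)); cbv beta.
    replace (S m + 1)%nat with p by lia. replace (S m + 2)%nat with (S p) by lia.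
    replace (INR p) with (INR (S m) + 1) by (unfold p; rewrite (S_INR (S m)); ring).
    rewrite (angle_sym (q (S p)) (q 0%nat) (q 1%nat)), (angle_sym (q (S m)) (q p) (q (S p))).
    rewrite (angle_sym (q p) (q 0%nat) (q 1%nat)), (angle_sym (q (S m)) (q p)) in IH.
    rewrite (angle_sym (q 0%nat) (q p) (q (S p))), (angle_sym (q 0%nat) (q (S p)) (q p)) in Tri.
    lra.
Qed.

Lemma rsum_ext f g n : (forall t, (t < n)%nat -> f t = g t) -> rsum f n = rsum g n.
Proof.
  induction n; intros H; simpl; [reflexivity |].
  rewrite IHn, H; auto; intros; apply H; lia.
Qed.

Lemma rsum_plus f g n : rsum (fun t => f t + g t) n = rsum f n + rsum g n.
Proof. induction n; simpl; [lra |]. rewrite IHn; lra. Qed.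

Lemma rsum_const c n : rsum (fun _ => c) n = INR n * c.
Proof. induction n; simpl rsum; [simpl; lra |]. rewrite IHn, S_INR; lra. Qed.

Lemma rsum_shift f n : rsum f (S n) = f 0%nat + rsum (fun t => f (t + 1)%nat) n.
Proof.
  induction n; simpl rsum; [simpl; lra |]. simpl rsum in IHn. rewrite IHn.
  replace (n + 1)%nat with (S n) by lia. lra.
Qed.

Lemma rsum_swap (h : nat -> nat -> R) a b :
  rsum (fun i => rsum (h i) b) a = rsum (fun t => rsum (fun i => h i t) a) b.
Proof.
  induction a; simpl.
  - rewrite rsum_const. simpl; lra.
  - rewrite IHa, <- rsum_plus. reflexivity.
Qed.

Lemma rsum_periodic f n s : (forall t, f (t + n)%nat = f t) ->
  rsum (fun i => f (i + s)%nat) n = rsum f n.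
Proof.
  intros Hf. induction s.
  - apply rsum_ext; intros; f_equal; lia.
  - rewrite <- IHs, (rsum_ext _ (fun t => f (t + 1 + s)%nat)) by (intros; f_equal; lia).
    pose proof (rsum_shift (fun i => f (i + s)%nat) n) as Hshift. simpl rsum in Hshift.
    replace (n + s)%nat with (s + n)%nat in Hshift by lia.
    rewrite Hf, Nat.add_0_l in Hshift. lra.
Qed.

(* Every value of a period-n function is counted m times. *)
Lemma rsum_windows f n m : (forall t, f (t + n)%nat = f t) ->
  rsum (fun i => rsum (fun t => f (i + t + 1)%nat) m) n = INR m * rsum f n.
Proof.
  intros Hf. rewrite rsum_swap, <- rsum_const.
  apply rsum_ext; intros t _.
  rewrite <- (rsum_periodic f n (t + 1) Hf).
  apply rsum_ext; intros; f_equal; lia.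
Qed.

Lemma mod_add_neq n i b : (0 < b < n)%nat -> ((i + b) mod n <> i mod n)%nat.
Proof.
  intros Hb. rewrite <- Nat.Div0.add_mod_idemp_l.
  pose proof (Nat.mod_upper_bound i n ltac:(lia)).
  destruct (Nat.lt_ge_cases (i mod n + b) n).
  - rewrite Nat.mod_small by lia. lia.
  - replace (i mod n + b)%nat with ((i mod n + b - n) + 1 * n)%nat by lia.
    rewrite Nat.Div0.mod_add, Nat.mod_small by lia. lia.
Qed.

Lemma vert_add_n n v t : (0 < n)%nat -> vert n v (t + n) = vert n v t.
Proof.
  intros Hn. unfold vert. f_equal. replace (t + n)%nat with (t + 1 * n)%nat by lia.
  apply Nat.Div0.mod_add.
Qed.

Lemma convex_edge_ccw n v s t : convex_ccw_polygon n v ->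
  (s mod n <> t mod n)%nat -> (s mod n <> (t + 1) mod n)%nat ->
  ccw (vert n v t) (vert n v (t + 1)) (vert n v s).
Proof.
  intros [Hn Hconv] Hst Hst1.
  assert (E : ((t mod n + 1) mod n = (t + 1) mod n)%nat) by (apply Nat.Div0.add_mod_idemp_l).
  pose proof (Hconv (t mod n) (s mod n) ltac:(apply Nat.mod_upper_bound; lia)
                 ltac:(apply Nat.mod_upper_bound; lia) Hst ltac:(rewrite E; exact Hst1)) as K.
  unfold ccw, vert in *. rewrite E, !Nat.Div0.mod_mod in K. exact K.
Qed.

(* All four vectors lie in the closed half-plane left of e, where the angular order is linear. *)
Lemma cross_pos_trans e x y z : 0 <= cross e x -> 0 < cross e y -> 0 < cross e z ->
  0 < cross x y -> 0 < cross y z -> 0 < cross x z.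
Proof.
  intros. assert (cross x z * cross e y = cross x y * cross e z + cross y z * cross e x)
    by (destruct e, x, y, z; unfold cross; simpl; ring).
  nra.
Qed.

Lemma convex_fan_ccw n v i b c : convex_ccw_polygon n v ->
  (0 < b)%nat -> (b < c)%nat -> (c < n)%nat ->
  ccw (vert n v i) (vert n v (i + b)) (vert n v (i + c)).
Proof.
  intros Hconv Hb Hbc Hcn.
  assert (Hn : (3 <= n)%nat) by (destruct Hconv; assumption).
  set (w := fun j => vsub (vert n v (i + j)) (vert n v i)).
  assert (Hnext : forall j, (1 <= j)%nat -> (j + 1 < n)%nat -> 0 < cross (w j) (w (j + 1)%nat)).
  { intros j Hj1 Hjn.
    pose proof (convex_edge_ccw n v i (i + j) Hconv) as K.
    unfold w; replace (i + (j + 1))%nat with (i + j + 1)%nat by lia.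
    apply ccw_rot, ccw_rot, K.
    - apply not_eq_sym, mod_add_neq; lia.
    - rewrite <- Nat.add_assoc. apply not_eq_sym, mod_add_neq; lia. }
  assert (Hfirst : forall j, (2 <= j)%nat -> (j < n)%nat -> 0 < cross (w 1%nat) (w j)).
  { intros j Hj2 Hjn. apply (convex_edge_ccw n v (i + j) i Hconv).
    - apply mod_add_neq; lia.
    - replace (i + j)%nat with ((i + 1) + (j - 1))%nat by lia. apply mod_add_neq; lia. }
  assert (Hfan : forall d, (b + 1 + d < n)%nat -> 0 < cross (w b) (w (b + 1 + d)%nat)).
  { induction d as [| d IH]; intros Hd.
    - rewrite Nat.add_0_r. apply Hnext; lia.
    - apply (cross_pos_trans (w 1%nat) (w b) (w (b + 1 + d)%nat)).
      + destruct (Nat.eq_dec b 1) as [-> | ]; [unfold cross; lra |].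
        apply Rlt_le, Hfirst; lia.
      + apply Hfirst; lia.
      + apply Hfirst; lia.
      + apply IH; lia.
      + replace (b + 1 + S d)%nat with (b + 1 + d + 1)%nat by lia. apply Hnext; lia. }
  replace c with (b + 1 + (c - b - 1))%nat by lia. apply Hfan. lia.
Qed.

Lemma convex_window_chain n v i m : convex_ccw_polygon n v -> (m < n)%nat ->
  ccw_chain (fun j => vert n v (i + j)) m.
Proof.
  intros Hconv Hm a b c Hab Hbc Hc.
  pose proof (convex_fan_ccw n v (i + a) (b - a) (c - a) Hconv
                ltac:(lia) ltac:(lia) ltac:(lia)) as K.
  replace (i + a + (b - a))%nat with (i + b)%nat in K by lia.
  replace (i + a + (c - a))%nat with (i + c)%nat in K by lia.
  exact K.
Qed.

(* [t + (n - 1)] is the predecessor of [t] modulo [n]. *)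
Definition interior_angle (n : nat) (v : nat -> pt) (t : nat) : R :=
  angle (vert n v (t + (n - 1))) (vert n v t) (vert n v (t + 1)).

Lemma interior_angle_periodic n v t : (0 < n)%nat ->
  interior_angle n v (t + n) = interior_angle n v t.
Proof.
  intros Hn. unfold interior_angle.
  replace (t + n + (n - 1))%nat with (t + (n - 1) + n)%nat by lia.
  replace (t + n + 1)%nat with (t + 1 + n)%nat by lia.
  rewrite !vert_add_n by exact Hn. reflexivity.
Qed.

Lemma window_angle_sum n v i m : convex_ccw_polygon n v -> (2 <= m)%nat -> (m < n)%nat ->
  angle (vert n v (i + m)) (vert n v i) (vert n v (i + 1))
  + rsum (fun t => interior_angle n v (i + t + 1)) (m - 1)
  + angle (vert n v (i + m - 1)) (vert n v (i + m)) (vert n v i) = INR (m - 1) * PI.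
Proof.
  intros Hconv Hm Hmn.
  destruct m as [| [| m']]; [lia | lia |].
  pose proof (chain_angle_sum _ m' (convex_window_chain n v i _ Hconv Hmn)) as K.
  cbv beta in K. rewrite Nat.add_0_r in K.
  replace (S (S m') - 1)%nat with (S m') by lia.
  replace (i + S (S m') - 1)%nat with (i + S m')%nat by lia.
  rewrite (rsum_ext _ (fun t => angle (vert n v (i + t)) (vert n v (i + (t + 1)))
                                      (vert n v (i + (t + 2)))));
    [exact K |].
  intros t _. unfold interior_angle.
  replace (i + t + 1 + (n - 1))%nat with (i + t + n)%nat by lia.
  replace (i + t + 1 + 1)%nat with (i + (t + 2))%nat by lia.
  replace (i + t + 1)%nat with (i + (t + 1))%nat by lia.
  rewrite vert_add_n by lia. reflexivity.
Qed.

Lemma polygon_angle_sum n v : convex_ccw_polygon n v ->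
  rsum (interior_angle n v) n = INR (n - 2) * PI.
Proof.
  intros Hconv. assert (Hn : (3 <= n)%nat) by (destruct Hconv; assumption).
  pose proof (window_angle_sum n v 0 (n - 1) Hconv ltac:(lia) ltac:(lia)) as K.
  simpl Nat.add in K. replace (n - 1 - 1)%nat with (n - 2)%nat in K by lia.
  replace (rsum (interior_angle n v) n)
    with (rsum (interior_angle n v) (S (S (n - 2)))) by (f_equal; lia).
  rewrite rsum_shift. change (rsum ?f (S ?m)) with (rsum f m + f m). cbv beta.
  replace (n - 2 + 1)%nat with (n - 1)%nat by lia.
  assert (Hlast : interior_angle n v (n - 1)
                  = angle (vert n v (n - 2)) (vert n v (n - 1)) (vert n v 0)).
  { unfold interior_angle.
    replace (n - 1 + (n - 1))%nat with (n - 2 + n)%nat by lia.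
    replace (n - 1 + 1)%nat with (0 + n)%nat by lia.
    rewrite !vert_add_n by lia. reflexivity. }
  rewrite Hlast.
  unfold interior_angle at 1; simpl Nat.add. lra.
Qed.

Lemma gutkin_window_sum n k v alpha i : convex_ccw_polygon n v ->
  (2 <= k)%nat -> (k < n)%nat -> gutkin_contact n k v alpha ->
  2 * alpha + rsum (fun t => interior_angle n v (i + t + 1)) (k - 1) = INR (k - 1) * PI.
Proof.
  intros Hconv Hk Hkn Hg.
  destruct (Hg i) as [Hstart Hend].
  rewrite angle_sym in Hstart.
  rewrite <- (window_angle_sum n v i k Hconv Hk Hkn), Hstart, Hend. ring.
Qed.

Theorem mainTheorem8 :
  forall (n k : nat) (v : nat -> pt) (alpha : R),
    (2 <= k)%nat -> (2 * k <= n)%nat ->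
    convex_ccw_polygon n v ->
    gutkin_contact n k v alpha ->
    alpha = PI * INR (k - 1) / INR n.
Proof.
  intros n k v alpha Hk Hkn Hconv Hg.
  assert (Hn : (0 < n)%nat) by lia.
  pose proof (rsum_windows (interior_angle n v) n (k - 1)
                (fun t => interior_angle_periodic n v t Hn)) as Total.
  rewrite (rsum_ext _ (fun _ => INR (k - 1) * PI - 2 * alpha)) in Total
    by (intros i _; rewrite <- (gutkin_window_sum n k v alpha i Hconv Hk ltac:(lia) Hg); ring).
  rewrite rsum_const, polygon_angle_sum in Total by exact Hconv.
  rewrite !minus_INR in * by lia.
  assert (0 < INR n) by (apply lt_0_INR; exact Hn).
  simpl (INR 1) in *; simpl (INR 2) in *.
  apply Rmult_eq_reg_l with (2 * INR n); [| lra].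
  field_simplify; [nra | lra].
Qed.
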